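(* Let $J:[0,\infty)\to\mathbb R$ be a concave, nondecreasing function with $J(0)=0$. Let $r\in(0,2)$ and $A,B>0$, and suppose $z>0$ satisfies $z^2\le A^2+B^2J(z^r)$. Then $$J(z)\le C\,J(A)\Bigl[1+J(A^r)\Bigl(\frac BA\Bigr)^2\Bigr]^{1/(2-r)},$$ where $C$ is a constant depending only on $r$. *)

From Stdlib Require Import Reals.
Open Scope R_scope.

Definition concave_on_nonneg (J : R -> R) : Prop :=
  forall x y t, 0 <= x -> 0 <= y -> 0 <= t <= 1 ->
    t * J x + (1 - t) * J y <= J (t * x + (1 - t) * y).

Definition nondecreasing_on_nonneg (J : R -> R) : Prop :=
  forall x y, 0 <= x -> x <= y -> J x <= J y.

From Stdlib Require Import Reals Lra.
Open Scope R_scope.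

(* Write z = t A.  If t <= 1, monotonicity gives J z <= J A.  Otherwise concavity
   with J 0 = 0 gives J (t x) <= t J x for t >= 1, both for J z and for J (z^r);
   dividing the hypothesis by A^2 yields t^2 <= t^r (1 + J (A^r) (B/A)^2), i.e.
   t <= (1 + J (A^r) (B/A)^2)^(1/(2-r)).  Hence the bound holds with C = 1. *)

Lemma nondecreasing_on_nonneg_ge0 (J : R -> R) (x : R) :
  nondecreasing_on_nonneg J -> J 0 = 0 -> 0 <= x -> 0 <= J x.
Proof. intros Hm H0 Hx; rewrite <- H0; apply Hm; lra. Qed.

(* Concavity between 0 and l x, at the point x = (1/l) (l x) + (1 - 1/l) 0. *)
Lemma concave_on_nonneg_scale (J : R -> R) (x l : R) :
  concave_on_nonneg J -> J 0 = 0 -> 0 <= x -> 1 <= l -> J (l * x) <= l * J x.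
Proof.
  intros Hc H0 Hx Hl.
  assert (Hinv : 0 <= / l <= 1).
  { split; [apply Rlt_le, Rinv_0_lt_compat; lra |].
    rewrite <- Rinv_1; apply Rinv_le_contravar; lra. }
  assert (H := Hc (l * x) 0 (/ l) ltac:(nra) ltac:(lra) Hinv).
  rewrite H0 in H.
  replace (/ l * (l * x) + (1 - / l) * 0) with x in H by (field; lra).
  apply Rmult_le_reg_l with (/ l); [apply Rinv_0_lt_compat; lra |].
  replace (/ l * (l * J x)) with (J x) by (field; lra).
  lra.
Qed.

Lemma Rpower_ge_1 (x p : R) : 1 <= x -> 0 <= p -> 1 <= Rpower x p.
Proof.
  intros Hx Hp.
  replace 1 with (Rpower 1 p) at 1
    by (unfold Rpower; rewrite ln_1, Rmult_0_r; apply exp_0).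
  apply Rle_Rpower_l; lra.
Qed.

Lemma Rpower_root_bound (t r M : R) :
  0 < t -> 0 < M -> r < 2 -> t ^ 2 <= Rpower t r * M ->
  t <= Rpower M (1 / (2 - r)).
Proof.
  intros Ht HM Hr Hle.
  assert (Hsplit : t ^ 2 = Rpower t r * Rpower t (2 - r)).
  { rewrite <- Rpower_plus, <- Rpower_pow by exact Ht.
    f_equal; simpl; ring. }
  assert (Htr : 0 < Rpower t r) by apply exp_pos.
  assert (Hroot : Rpower t (2 - r) <= M).
  { apply Rmult_le_reg_l with (Rpower t r); [exact Htr | lra]. }
  replace t with (Rpower (Rpower t (2 - r)) (1 / (2 - r))) at 1.
  - apply Rle_Rpower_l; [apply Rlt_le, Rdiv_lt_0_compat; lra |].
    split; [apply exp_pos | exact Hroot].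
  - rewrite Rpower_mult.
    replace ((2 - r) * (1 / (2 - r))) with 1 by (field; lra).
    apply Rpower_1; exact Ht.
Qed.

Lemma concave_hypothesis_rescaled (J : R -> R) (r A B t : R) :
  concave_on_nonneg J -> J 0 = 0 -> 0 <= r -> 0 < A -> 1 <= t ->
  (t * A) ^ 2 <= A ^ 2 + B ^ 2 * J (Rpower (t * A) r) ->
  t ^ 2 <= Rpower t r * (1 + J (Rpower A r) * (B / A) ^ 2).
Proof.
  intros Hc H0 Hr HA Ht Hineq.
  assert (HAr : 0 < Rpower A r) by apply exp_pos.
  assert (Htr : 1 <= Rpower t r) by (apply Rpower_ge_1; lra).
  assert (HJzr : J (Rpower (t * A) r) <= Rpower t r * J (Rpower A r)).
  { rewrite <- Rpower_mult_distr by lra.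
    apply concave_on_nonneg_scale; auto; lra. }
  apply Rmult_le_reg_r with (A ^ 2); [nra |].
  replace (Rpower t r * (1 + J (Rpower A r) * (B / A) ^ 2) * A ^ 2)
    with (Rpower t r * A ^ 2 + B ^ 2 * (Rpower t r * J (Rpower A r)))
    by (field; lra).
  assert (A ^ 2 <= Rpower t r * A ^ 2) by nra.
  assert (B ^ 2 * J (Rpower (t * A) r) <= B ^ 2 * (Rpower t r * J (Rpower A r)))
    by (apply Rmult_le_compat_l; [apply pow2_ge_0 | exact HJzr]).
  lra.
Qed.

Theorem lemma2p2 (r : R) (hr : 0 < r < 2) :
  exists C : R,
    forall (J : R -> R) (A B z : R),
      concave_on_nonneg J -> nondecreasing_on_nonneg J -> J 0 = 0 ->
      0 < A -> 0 < B -> 0 < z ->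
      z ^ 2 <= A ^ 2 + B ^ 2 * J (Rpower z r) ->
      J z <= C * J A * Rpower (1 + J (Rpower A r) * (B / A) ^ 2) (1 / (2 - r)).
Proof.
  exists 1. intros J A B z Hc Hm H0 HA HB Hz Hineq.
  set (K := J (Rpower A r) * (B / A) ^ 2).
  assert (HJA : 0 <= J A) by (apply nondecreasing_on_nonneg_ge0; auto; lra).
  assert (HK : 0 <= K).
  { apply Rmult_le_pos; [| apply pow2_ge_0].
    apply nondecreasing_on_nonneg_ge0; auto; left; apply exp_pos. }
  assert (HP : 1 <= Rpower (1 + K) (1 / (2 - r)))
    by (apply Rpower_ge_1; [lra | apply Rlt_le, Rdiv_lt_0_compat; lra]).
  destruct (Rle_or_lt z A) as [HzA | HAz].
  { assert (J z <= J A) by (apply Hm; lra). nra. }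
  set (t := z / A).
  assert (Hzt : z = t * A) by (unfold t; field; lra).
  assert (Ht : 1 < t) by nra.
  assert (HJz : J z <= t * J A)
    by (rewrite Hzt; apply concave_on_nonneg_scale; auto; lra).
  rewrite Hzt in Hineq.
  apply concave_hypothesis_rescaled in Hineq; auto; try lra.
  assert (Ht_le : t <= Rpower (1 + K) (1 / (2 - r)))
    by (apply Rpower_root_bound; auto; lra).
  nra.
Qed.
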